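(* A complex linear map $\Phi: M_n(\mathbb{C}) \to M_r(\mathbb{C})$ preserves range orthogonality, i.e. $\Phi(A)^*\Phi(B) = 0$ whenever $A^*B = 0$, if and only if there exist a nonnegative integer $k$ with $nk \le r$ and matrices $S, T \in M_r(\mathbb{C})$ with $S^*S = I_r$ such that $$\Phi(A) = S\begin{pmatrix} I_k\otimes A & 0\\ 0 & 0_{r-nk}\end{pmatrix}T\quad\text{for all } A\in M_n(\mathbb{C}).$$
   Context: $A^*$ denotes the conjugate transpose; $I_k\otimes A$ denotes $A\oplus\cdots\oplus A$ ($k$ copies). *)

(* complex numbers modelled by algC (algebraic complex numbers). *)
From HB Require Import structures.
From mathcomp Require Import all_boot all_order all_algebra all_field.
Set Implicit Arguments. Unset Strict Implicit. Unset Printing Implicit Defensive.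
Import GRing.Theory Num.Theory.
Local Open Scope ring_scope.

Definition mxadj (m n : nat) (A : 'M[algC]_(m, n)) : 'M[algC]_(n, m) :=
  (map_mx (@Num.conj algC) A)^T.

(* pad a square m x m matrix B to an r x r matrix [B 0; 0 0_(r-m)]
   (B occupies the top-left corner; entries beyond r are truncated, which
   never happens when m <= r) *)
Definition padmx (r m : nat) (B : 'M[algC]_m) : 'M[algC]_r :=
  \matrix_(i < r, j < r)
    match (insub (val i) : option 'I_m), (insub (val j) : option 'I_m) with
    | Some i', Some j' => B i' j'
    | _, _ => 0
    end.

(* I_k ⊗ A = A ⊕ ... ⊕ A (k copies), of size \sum_(i<k) n = n k *)
Definition kronI (n k : nat) (A : 'M[algC]_n) : 'M[algC]_(\sum_(i < k) n) :=
  \mxdiag_(i < k) A.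

(* Put F_ij = Phi(E_ij).  Since E_ij and E_kl have orthogonal
   ranges for i <> k, and so do E_ij + E_kj and E_il - E_kl, the block rows
   G_i = [F_i1 ... F_in] satisfy G_i^* G_k = [i = k] P for a single matrix P.
   An orthonormal basis Q = G_0 X of the column space of G_0 then yields
   isometries Q_i = G_i X with mutually orthogonal ranges and a common factor R
   such that G_i = Q_i R, whence Phi(A) = sum_ij a_ij Q_i R_j.  Regrouping the
   columns of the Q_i by their index turns this sum into W (I_m (x) A) V with
   W an isometry, and completing W to a square isometry S gives the normal
   form.  Conversely I_k (x) - preserves A^* B = 0, and so does A |-> S A T
   when S^* S = I. *)

From HB Require Import structures.
From mathcomp Require Import all_boot all_algebra all_field.
Import GRing.Theory Num.Theory.
Set Implicit Arguments. Unset Strict Implicit. Unset Printing Implicit Defensive.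
Local Open Scope ring_scope.
Local Open Scope sesquilinear_scope.

Local Notation "B ^!" := (orthomx Num.conj (mx_of_hermitian (hermitian1mx _)) B)
  : matrix_set_scope.

Section Adjoint.
Implicit Types m n p : nat.

Lemma mxadjE m n (A : 'M[algC]_(m, n)) : mxadj A = A ^t*.
Proof. exact: map_trmx. Qed.

Lemma mxadjK m n : cancel (@mxadj m n) (@mxadj n m).
Proof. by move=> A; rewrite !mxadjE trmxCK. Qed.

Lemma mxadjM m n p (A : 'M[algC]_(m, n)) (B : 'M[algC]_(n, p)) :
  mxadj (A *m B) = mxadj B *m mxadj A.
Proof. by rewrite !mxadjE trmx_mul map_mxM. Qed.

Lemma mxadjD m n (A B : 'M[algC]_(m, n)) : mxadj (A + B) = mxadj A + mxadj B.
Proof. by rewrite !mxadjE linearD map_mxD. Qed.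

Lemma mxadj_delta m n (i : 'I_m) (j : 'I_n) :
  mxadj (delta_mx i j : 'M[algC]_(m, n)) = delta_mx j i.
Proof. by rewrite mxadjE trmx_delta map_delta_mx. Qed.

Lemma mxadj_pid m n k : mxadj (pid_mx k : 'M[algC]_(m, n)) = pid_mx k.
Proof. by rewrite mxadjE tr_pid_mx map_pid_mx. Qed.

Lemma mxadj_mxrow m q (q_ : 'I_q -> nat) (B_ : forall j, 'M[algC]_(m, q_ j)) :
  mxadj (\mxrow_j B_ j) = \mxcol_j mxadj (B_ j).
Proof. by apply/matrixP => i j; rewrite !mxE. Qed.

Lemma mxadj_kronI n k (A : 'M[algC]_n) : mxadj (kronI k A) = kronI k (mxadj A).
Proof.
apply/matrixP => a b; rewrite /kronI /mxdiag !mxE eq_sym.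
by case: eqP => [e|_]; rewrite ?e ?conform_mx_id !mxE ?conjC0.
Qed.

Lemma mxadj_mul_eq0 m n (X : 'M[algC]_(m, n)) : mxadj X *m X = 0 -> X = 0.
Proof.
move=> XX0; apply/matrixP => i j; rewrite mxE.
have /matrixP/(_ j j) := XX0; rewrite !mxE => /eqP.
under eq_bigr do rewrite !mxE mulrC; rewrite psumr_eq0 => [/allP/(_ i)|k _].
  by rewrite mem_index_enum mul_conjC_eq0 => /(_ isT)/implyP/(_ isT)/eqP.
exact: mul_conjC_ge0.
Qed.

End Adjoint.

Section Isometry.
Implicit Types m n p r : nat.

Lemma isometry_unitarymxP m n (U : 'M[algC]_(m, n)) :
  reflect (mxadj U *m U = 1%:M) (mxadj U \is unitarymx).
Proof. by rewrite qualifE -mxadjE mxadjK; apply: eqP. Qed.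

Lemma submx_mulmxKtV m n p (A : 'M[algC]_(m, n)) (U : 'M[algC]_(p, n)) :
  U \is unitarymx -> (A <= U)%MS -> A *m U^t* *m U = A.
Proof.
by move=> Uu /submxP[D ->]; rewrite -[D *m U *m _]mulmxA (unitarymxP Uu) mulmx1.
Qed.

Lemma col_mx_unitarymx m1 m2 n (A : 'M[algC]_(m1, n)) (B : 'M[algC]_(m2, n)) :
  A \is unitarymx -> B \is unitarymx -> A *m B^t* = 0 ->
  col_mx A B \is unitarymx.
Proof.
move=> Au Bu AB; apply/unitarymxP.
have BA : B *m A^t* = 0.
  by rewrite -[LHS]trmxCK trmx_mul map_mxM trmxCK AB trmx0 map_mx0.
rewrite tr_col_mx map_row_mx mul_col_row (unitarymxP Au) (unitarymxP Bu) AB BA.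
by rewrite -scalar_mx_block.
Qed.

Lemma isometry_colspace_basis r K (M : 'M[algC]_(r, K)) :
  exists m (Q : 'M[algC]_(r, m)) (X : 'M[algC]_(K, m)),
    [/\ mxadj Q *m Q = 1%:M, Q = M *m X & M = Q *m (mxadj Q *m M)].
Proof.
pose B := schmidt (row_base (mxadj M)).
have Bu : B \is unitarymx by apply: schmidt_unitarymx; rewrite rank_leq_col.
have BM : (B :=: mxadj M)%MS :=
  eqmx_trans (eqmx_schmidt_free (row_base_free _)) (eq_row_base _).
have [D BD] : exists D, B = D *m mxadj M by apply/submxP; rewrite BM.
exists _, (mxadj B), (mxadj D); split.
- by apply/isometry_unitarymxP; rewrite mxadjK.
- by rewrite BD mxadjM mxadjK.
apply: (can_inj (@mxadjK _ _)); rewrite !mxadjM !mxadjK.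
by rewrite [mxadj B]mxadjE submx_mulmxKtV // BM.
Qed.

Lemma isometry_extend r N (W : 'M[algC]_(r, N)) : mxadj W *m W = 1%:M ->
  exists S : 'M[algC]_r, mxadj S *m S = 1%:M /\ S *m pid_mx N = W.
Proof.
move=> /isometry_unitarymxP; set V := mxadj W => Vu.
pose B := schmidt (row_base V^!%MS).
have Bu : B \is unitarymx by apply: schmidt_unitarymx; rewrite rank_leq_col.
have VB : V *m B^t* = 0.
  apply/orthomx1P; rewrite orthomx_sym.
  by rewrite /B eqmx_schmidt_free ?row_base_free // eq_row_base.
have e : (N + \rank V^!)%N = r.
  by have := add_rank_ortho V; rewrite (mxrank_unitary Vu).
suff: exists U : 'M[algC]_(N + \rank V^!, r),
    U \is unitarymx /\ pid_mx N *m U = V.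
  rewrite e => -[U [Uu UV]]; exists (mxadj U); split.
    by apply/isometry_unitarymxP; rewrite mxadjK.
  by rewrite -mxadj_pid -mxadjM UV mxadjK.
exists (col_mx V B); split; first exact: col_mx_unitarymx.
by rewrite pid_mx_row mul_row_col mul1mx mul0mx addr0.
Qed.

End Isometry.

Lemma orthogonal_gram_factor (I : finType) (i0 : I) r K
    (G : I -> 'M[algC]_(r, K)) (P : 'M[algC]_K) :
  (forall i k, mxadj (G i) *m G k = (i == k)%:R *: P) ->
  exists m (Q : I -> 'M[algC]_(r, m)) (R : 'M[algC]_(m, K)),
    (forall i k, mxadj (Q i) *m Q k = (i == k)%:R%:M) /\
    (forall i, G i = Q i *m R).
Proof.
move=> GG.
have GYZ i k p q (Y : 'M_(K, p)) (Z : 'M_(K, q)) :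
    mxadj (G i *m Y) *m (G k *m Z) = (i == k)%:R *: (mxadj Y *m P *m Z).
  by rewrite mxadjM !mulmxA -(mulmxA (mxadj Y)) GG -scalemxAr -scalemxAl.
have [m [Q0 [X [Q0_iso Q0E G0_proj]]]] := isometry_colspace_basis (G i0).
subst Q0.
have P_XX p q (Y : 'M_(K, p)) (Z : 'M_(K, q)) :
    mxadj Y *m P *m Z = mxadj (G i0 *m Y) *m (G i0 *m Z).
  by rewrite GYZ eqxx scale1r.
exists m, (fun i => G i *m X), (mxadj (G i0 *m X) *m G i0); split=> [i k|i].
  by rewrite GYZ P_XX Q0_iso scalemx1.
(* G_i D has the same Gram matrix as G_i0 D, which vanishes. *)
pose D := 1%:M - X *m (mxadj (G i0 *m X) *m G i0).
have G0D : G i0 *m D = 0.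
  by rewrite mulmxBr mulmx1 [G i0 *m (X *m _)]mulmxA -G0_proj subrr.
have /mxadj_mul_eq0/eqP : mxadj (G i *m D) *m (G i *m D) = 0.
  by rewrite GYZ eqxx scale1r P_XX G0D mulmx0.
by rewrite mulmxBr mulmx1 subr_eq0 !mulmxA => /eqP.
Qed.

Section Interlace.
Variables (n m : nat).

Definition interlace_cols r (Q : 'I_n -> 'M[algC]_(r, m)) :
    'M[algC]_(r, \sum_(p < m) n) :=
  \mxrow_(p < m) \matrix_(a, i) Q i a p.

Definition interlace_rows s (R : 'I_n -> 'M[algC]_(m, s)) :
    'M[algC]_(\sum_(p < m) n, s) :=
  \mxcol_(p < m) \matrix_(j, b) R j p b.

Lemma interlace_kronI r s (Q : 'I_n -> 'M[algC]_(r, m))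
    (R : 'I_n -> 'M[algC]_(m, s)) (A : 'M[algC]_n) :
  interlace_cols Q *m kronI m A *m interlace_rows R =
  \sum_i \sum_j A i j *: (Q i *m R j).
Proof.
rewrite /kronI mul_mxrow_mxdiag mul_mxrow_mxcol; apply/matrixP => a b.
rewrite !summxE.
under eq_bigr do rewrite mxE.
under eq_bigr do under eq_bigr do rewrite !mxE big_distrl.
under [RHS]eq_bigr do rewrite summxE.
under [RHS]eq_bigr do under eq_bigr do rewrite !mxE big_distrr.
rewrite exchange_big; under eq_bigr do rewrite exchange_big.
rewrite exchange_big.
apply: eq_bigr => i _; apply: eq_bigr => j _; apply: eq_bigr => p _.
by rewrite mxE [RHS]mulrCA mulrA.
Qed.

Lemma interlace_cols_isometry r (Q : 'I_n -> 'M[algC]_(r, m)) :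
  (forall i k, mxadj (Q i) *m Q k = (i == k)%:R%:M) ->
  mxadj (interlace_cols Q) *m interlace_cols Q = 1%:M.
Proof.
move=> QQ; rewrite mxadj_mxrow mul_mxcol_mxrow -(mxdiagZ 1) /mxdiag.
apply: eq_mxblock => p q; apply/matrixP => i k.
have -> : (mxadj (\matrix_(a, i) Q i a p) *m \matrix_(a, i) Q i a q) i k =
          (mxadj (Q i) *m Q k) p q.
  by rewrite !mxE; apply: eq_bigr => a _; rewrite !mxE.
rewrite QQ !mxE.
by case: (p =P q) => _; rewrite ?conform_mx_id ?mxE ?mulr1n ?mulr0n.
Qed.

End Interlace.

Lemma padmx_pid r N (D : 'M[algC]_N) :
  (N <= r)%N -> padmx r D = pid_mx N *m D *m pid_mx N.
Proof.
move=> le_Nr; move: (r - N)%N (subnKC le_Nr) => q <-.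
rewrite pid_mx_col pid_mx_row mul_col_mx mul1mx mul0mx mul_col_row.
rewrite mulmx1 !mulmx0 mul0mx; apply/matrixP => i j; rewrite /padmx !mxE /=.
have insub_hi (k : 'I_q) : insub (N + k)%N = None :> option 'I_N.
  by rewrite insubF // ltnNge leq_addr.
case: splitP => [i' ->|i' ->]; rewrite ?valK ?insub_hi mxE.
  by case: splitP => [j' ->|j' ->]; rewrite ?valK ?insub_hi ?mxE.
by case: split => k; rewrite mxE.
Qed.

Lemma isometry_padmx r N (W : 'M[algC]_(r, N)) (V : 'M[algC]_(N, r)) :
  mxadj W *m W = 1%:M ->
  exists S T : 'M[algC]_r, [/\ (N <= r)%N, mxadj S *m S = 1%:M &
    forall D, W *m D *m V = S *m padmx r D *m T].
Proof.
move=> WW; have le_Nr : (N <= r)%N.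
  by have /isometry_unitarymxP/mxrank_unitary <- := WW; apply: rank_leq_col.
have [S [SS SW]] := isometry_extend WW.
have pid_pid : (pid_mx N : 'M[algC]_(N, r)) *m pid_mx N = 1%:M.
  by rewrite pid_mx_id // pid_mx_1.
exists S, (pid_mx N *m V); split=> // D.
by rewrite padmx_pid // !mulmxA SW -[W *m D *m _ *m _]mulmxA pid_pid mulmx1.
Qed.

Definition range_ortho_preserving n r (Phi : 'M[algC]_n -> 'M[algC]_r) :=
  forall A B, mxadj A *m B = 0 -> mxadj (Phi A) *m Phi B = 0.

Lemma kronI_mul n k (A B : 'M[algC]_n) :
  kronI k A *m kronI k B = kronI k (A *m B).
Proof.
rewrite {1}/kronI /mxdiag mul_mxblock_mxdiag; apply: eq_mxblock => i j.
by case: eqP => _; rewrite ?conform_mx_id ?mul0mx.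
Qed.

Lemma isometry_mul_range_ortho m n p q (U : 'M[algC]_(m, n))
    (X Y : 'M[algC]_(n, p)) (P : 'M[algC]_(p, q)) :
  mxadj U *m U = 1%:M -> mxadj X *m Y = 0 ->
  mxadj (U *m X *m P) *m (U *m Y *m P) = 0.
Proof.
move=> UU XY; rewrite !mxadjM !mulmxA -[_ *m mxadj U *m U]mulmxA UU mulmx1.
by rewrite -[_ *m mxadj X *m Y]mulmxA XY mulmx0 mul0mx.
Qed.

Lemma padmx_kronI_range_ortho n r k (S T : 'M[algC]_r) :
  (n * k <= r)%N -> mxadj S *m S = 1%:M ->
  range_ortho_preserving (fun A : 'M[algC]_n => S *m padmx r (kronI k A) *m T).
Proof.
move=> nk SS A B AB.
have le_Nr : (\sum_(i < k) n <= r)%N by rewrite sum_nat_const card_ord mulnC.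
have padE (X : 'M[algC]_n) : S *m padmx r (kronI k X) *m T =
    S *m pid_mx (\sum_(i < k) n) *m kronI k X *m (pid_mx (\sum_(i < k) n) *m T).
  by rewrite padmx_pid // !mulmxA.
rewrite /= !padE; apply: isometry_mul_range_ortho.
  rewrite mxadjM mxadj_pid -mulmxA (mulmxA (mxadj S)) SS mul1mx.
  by rewrite pid_mx_id // pid_mx_1.
by rewrite mxadj_kronI kronI_mul AB /kronI mxdiag0.
Qed.

Section RangeOrthoPreserving.
Variables (n r : nat) (Phi : {linear 'M[algC]_n -> 'M[algC]_r}).
Hypothesis PhiP : range_ortho_preserving Phi.

Lemma Phi_delta_orth i j k l :
  i != k -> mxadj (Phi (delta_mx i j)) *m Phi (delta_mx k l) = 0.
Proof. by move=> ik; apply: PhiP; rewrite mxadj_delta mul_delta_mx_0. Qed.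

Lemma Phi_delta_gram i j k l :
  mxadj (Phi (delta_mx i j)) *m Phi (delta_mx i l) =
  mxadj (Phi (delta_mx k j)) *m Phi (delta_mx k l).
Proof.
have [<-//|ik] := eqVneq i k; have ki : k != i by rewrite eq_sym.
have AB : mxadj (delta_mx i j + delta_mx k j : 'M[algC]_n) *m
          (delta_mx i l - delta_mx k l) = 0.
  rewrite mxadjD !mxadj_delta mulmxDl !mulmxBr !mul_delta_mx.
  rewrite (mul_delta_mx_0 _ _ _ ik) (mul_delta_mx_0 _ _ _ ki).
  by rewrite oppr0 addr0 sub0r addrN.
move/eqP: (PhiP AB); rewrite linearD linearB /= mxadjD mulmxDl !mulmxBr.
rewrite (Phi_delta_orth _ _ ik) (Phi_delta_orth _ _ ki) subr0 sub0r subr_eq0.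
by move/eqP.
Qed.

Definition Phi_row i : 'M[algC]_(r, \sum_(j < n) r) :=
  \mxrow_(j < n) Phi (delta_mx i j).

Lemma Phi_row_gram i0 i k :
  mxadj (Phi_row i) *m Phi_row k =
  (i == k)%:R *: (mxadj (Phi_row i0) *m Phi_row i0).
Proof.
rewrite /Phi_row !mxadj_mxrow !mul_mxcol_mxrow.
have [<-|ik] := eqVneq i k.
  by rewrite scale1r; apply: eq_mxblock => j l; apply: Phi_delta_gram.
rewrite scale0r -(@mxblock0 _ _ _ (fun=> r) (fun=> r)).
by apply: eq_mxblock => j l; apply: Phi_delta_orth.
Qed.

Lemma range_ortho_kronI_decomposition (i0 : 'I_n) :
  exists m (W : 'M[algC]_(r, \sum_(p < m) n))
         (V : 'M[algC]_(\sum_(p < m) n, r)),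
    mxadj W *m W = 1%:M /\ forall A, Phi A = W *m kronI m A *m V.
Proof.
have [m [Q [R [QQ PhiQR]]]] := orthogonal_gram_factor i0 (Phi_row_gram i0).
exists m, (interlace_cols Q), (interlace_rows (submxrow R)).
split=> [|A]; first exact: interlace_cols_isometry.
rewrite interlace_kronI {1}(matrix_sum_delta A) linear_sum.
apply: eq_bigr => i _; rewrite linear_sum; apply: eq_bigr => j _.
by rewrite linearZ /= mul_submxrow -PhiQR mxrowK.
Qed.

End RangeOrthoPreserving.

Theorem theorem4p7 (n r : nat) (Phi : {linear 'M[algC]_n -> 'M[algC]_r}) :
  (forall A B : 'M[algC]_n, mxadj A *m B = 0 -> mxadj (Phi A) *m Phi B = 0)
  <->
  (exists (k : nat) (S T : 'M[algC]_r),
      (n * k <= r)%N /\ mxadj S *m S = 1%:M /\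
      forall A : 'M[algC]_n, Phi A = S *m padmx r (kronI k A) *m T).
Proof.
split=> [PhiP | [k [S [T [nk [SS PhiE]]]]] A B]; last first.
  by rewrite !PhiE; apply: padmx_kronI_range_ortho.
case: n Phi PhiP => [|n] Phi PhiP.
  exists 0%N, 1%:M, 0; split=> //; split=> [|A].
    by rewrite mxadjE trmx1 map_mx1 mulmx1.
  by rewrite (flatmx0 A) linear0 mulmx0.
have [m [W [V [WW PhiWV]]]] := range_ortho_kronI_decomposition PhiP ord0.
have [S [T [le_Nr SS WST]]] := isometry_padmx V WW.
exists m, S, T; split; first by rewrite sum_nat_const card_ord mulnC in le_Nr.
by split=> // A; rewrite PhiWV WST.
Qed.
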